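(* Fix integers $\ell<\mu<u$ and a scale $s>0$. Let $Z$ be the random variable on $\{\ell,\ell+1,\dots,u\}$ with $$\Pr[Z=k]=\begin{cases}F(\ell\mid\mu,s)&k=\ell,\\ p(k\mid\mu,s)&\ell<k<u,\\ 1-F(u-1\mid\mu,s)&k=u,\\ 0&\text{otherwise},\end{cases}$$ where $p(k\mid\mu,s)=\frac{e^{1/s}-1}{e^{1/s}+1}e^{-|k-\mu|/s}$ and $F(x\mid\mu,s)=\frac{e^{1/s}}{e^{1/s}+1}e^{-(\mu-x)/s}$ if $x\le\mu$, and $F(x\mid\mu,s)=1-\frac{1}{e^{1/s}+1}e^{-(x-\mu)/s}$ if $x>\mu$. If the support $\{\ell,\dots,u\}$ contains at least four points, then there exists $k\in\{\ell,\dots,u\}$ such that $\Pr[Z=k]\notin\{t/2^N: t,N\in\mathbb{N}\}$, i.e. at least one output mass is not a dyadic rational.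
   Context: $Z$ is the Discrete Laplace distribution with shift $\mu$ and scale $s$ censored (clamped) to $[\ell,u]$. *)

From Stdlib Require Import Reals ZArith Lra Lia.
Open Scope R_scope.

Definition dlap_pmf (mu s : R) (k : R) : R :=
  (exp (1 / s) - 1) / (exp (1 / s) + 1) * exp (- Rabs (k - mu) / s).

Definition dlap_cdf (mu s : R) (x : R) : R :=
  if Rle_dec x mu then exp (1 / s) / (exp (1 / s) + 1) * exp (- (mu - x) / s)
  else 1 - 1 / (exp (1 / s) + 1) * exp (- (x - mu) / s).

Definition clamped_dlap_mass (l u mu : Z) (s : R) (k : Z) : R :=
  if (k =? l)%Z then dlap_cdf (IZR mu) s (IZR l)
  else if (k =? u)%Z then 1 - dlap_cdf (IZR mu) s (IZR (u - 1))
  else if ((l <? k)%Z && (k <? u)%Z)%bool then dlap_pmf (IZR mu) s (IZR k)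
  else 0.

Definition is_dyadic (x : R) : Prop :=
  exists t N : nat, x = INR t / 2 ^ N.

(** The mass at [mu] is [X = (a - 1)/(a + 1)] and the mass at a neighbour
    [mu +- 1] is [Y = X / a], where [a = e^(1/s) > 1]. For [q = 1 + X = 2a/(a + 1)]
    one has [2 / q = (a + 1)/a = 2 - X - Y]. If [X] and [Y] were both dyadic, then
    [q = t / 2^N] and [2 / q] would be dyadic; as their product is 2, [t] divides a
    power of two, so [q] is a power of two; but [1 < q < 2]. *)

From Stdlib Require Import Reals ZArith Znumtheory Zpow_facts Lia Lra Classical.

Open Scope R_scope.

(* Unlike [is_dyadic], numerators may be negative, so that [dyadic] is closed under subtraction. *)
Definition dyadic (x : R) : Prop := exists (t : Z) (N : nat), x = IZR t / 2 ^ N.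

Lemma is_dyadic_dyadic (x : R) : is_dyadic x -> dyadic x.
Proof.
  intros [t [N ->]]. exists (Z.of_nat t), N. now rewrite INR_IZR_INZ.
Qed.

Lemma dyadic_IZR (z : Z) : dyadic (IZR z).
Proof.
  exists z, 0%nat. simpl. field.
Qed.

Lemma dyadic_add (x y : R) : dyadic x -> dyadic y -> dyadic (x + y).
Proof.
  intros [t [N ->]] [r [M ->]].
  exists (t * 2 ^ Z.of_nat M + r * 2 ^ Z.of_nat N)%Z, (N + M)%nat.
  rewrite plus_IZR, !mult_IZR, <- !pow_IZR, pow_add.
  field; split; apply pow_nonzero; lra.
Qed.

Lemma dyadic_opp (x : R) : dyadic x -> dyadic (- x).
Proof.
  intros [t [N ->]]. exists (- t)%Z, N. rewrite opp_IZR. field. apply pow_nonzero; lra.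
Qed.

Lemma dyadic_sub (x y : R) : dyadic x -> dyadic y -> dyadic (x - y).
Proof.
  intros Hx Hy. apply dyadic_add; [exact Hx | now apply dyadic_opp].
Qed.

Lemma dyadic_unit_is_pow2 (q : R) :
  0 < q -> dyadic q -> dyadic (2 / q) ->
  exists (m : Z) (N : nat), q = IZR (2 ^ m) / 2 ^ N.
Proof.
  intros Hq [t [N Ht]] [r [M Hr]].
  assert (HN : 0 < 2 ^ N) by (apply pow_lt; lra).
  assert (HM : 0 < 2 ^ M) by (apply pow_lt; lra).
  assert (Ht_pos : (0 < t)%Z).
  { apply lt_IZR. replace (IZR t) with (q * 2 ^ N) by (rewrite Ht; field; lra).
    now apply Rmult_lt_0_compat. }
  assert (Htr : (t * r = 2 ^ Z.of_nat (S (N + M)))%Z).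
  { apply eq_IZR. rewrite mult_IZR, <- pow_IZR, <- tech_pow_Rmult, pow_add.
    replace (IZR t) with (q * 2 ^ N) by (rewrite Ht; field; lra).
    replace (IZR r) with (2 / q * 2 ^ M) by (rewrite Hr; field; lra).
    field; lra. }
  destruct (Zdivide_power_2 t 2 (Z.of_nat (S (N + M)))) as [m Hm]; try lia.
  - exact prime_2.
  - exists r. lia.
  - exists m, N. now rewrite Ht, Hm.
Qed.

Lemma no_pow2_ratio_between_1_and_2 (m : Z) (N : nat) :
  ~ (1 < IZR (2 ^ m) / 2 ^ N < 2).
Proof.
  intros [H1 H2].
  assert (HN : 0 < 2 ^ N) by (apply pow_lt; lra).
  assert (Hlo : (2 ^ Z.of_nat N < 2 ^ m)%Z).
  { apply lt_IZR. rewrite <- pow_IZR.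
    apply (Rmult_lt_reg_r (/ 2 ^ N)); [now apply Rinv_0_lt_compat|].
    rewrite Rinv_r by lra. exact H1. }
  assert (Hhi : (2 ^ m < 2 ^ Z.of_nat (S N))%Z).
  { apply lt_IZR. rewrite <- pow_IZR, <- tech_pow_Rmult.
    apply (Rmult_lt_reg_r (/ 2 ^ N)); [now apply Rinv_0_lt_compat|].
    replace (2 * 2 ^ N * / 2 ^ N) with 2 by (field; lra). exact H2. }
  assert (Hm : (0 <= m)%Z).
  { destruct (Z_lt_le_dec m 0) as [Hneg | Hnonneg]; [|exact Hnonneg].
    rewrite (Z.pow_neg_r 2 m Hneg) in Hlo.
    pose proof (Z.pow_pos_nonneg 2 (Z.of_nat N)). lia. }
  apply Z.pow_lt_mono_r_iff in Hlo; try lia.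
  apply Z.pow_lt_mono_r_iff in Hhi; lia.
Qed.

Lemma not_dyadic_center_and_neighbour (a : R) : 1 < a ->
  dyadic ((a - 1) / (a + 1)) -> ~ dyadic ((a - 1) / (a + 1) / a).
Proof.
  intros Ha HX HY.
  set (X := (a - 1) / (a + 1)) in *.
  set (q := 1 + X).
  assert (Hq : 1 < q < 2).
  { unfold q, X. split.
    - enough (0 < (a - 1) / (a + 1)) by lra. apply Rdiv_lt_0_compat; lra.
    - enough ((a - 1) / (a + 1) < 1) by lra.
      apply (Rmult_lt_reg_r (a + 1)); [lra|]. field_simplify; lra. }
  assert (Hinv : 2 / q = 2 - X - X / a) by (unfold q, X; field; lra).
  destruct (dyadic_unit_is_pow2 q) as [m [N Hmq]].
  - lra.
  - apply dyadic_add; [apply dyadic_IZR | exact HX].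
  - rewrite Hinv. apply dyadic_sub; [apply dyadic_sub; [apply dyadic_IZR|]|]; assumption.
  - apply (no_pow2_ratio_between_1_and_2 m N). now rewrite <- Hmq.
Qed.

Lemma clamped_dlap_mass_interior (l u mu k : Z) (s : R) :
  (l < k < u)%Z -> clamped_dlap_mass l u mu s k = dlap_pmf (IZR mu) s (IZR k).
Proof.
  intros Hk. unfold clamped_dlap_mass.
  replace (k =? l)%Z with false by (symmetry; apply Z.eqb_neq; lia).
  replace (k =? u)%Z with false by (symmetry; apply Z.eqb_neq; lia).
  replace (l <? k)%Z with true by (symmetry; apply Z.ltb_lt; lia).
  now replace (k <? u)%Z with true by (symmetry; apply Z.ltb_lt; lia).
Qed.

Lemma dlap_pmf_center (mu s : R) :
  dlap_pmf mu s mu = (exp (1 / s) - 1) / (exp (1 / s) + 1).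
Proof.
  unfold dlap_pmf.
  rewrite Rminus_diag, Rabs_R0, Ropp_0, Rdiv_0_l, exp_0. ring.
Qed.

Lemma dlap_pmf_neighbour (mu s k : R) : Rabs (k - mu) = 1 ->
  dlap_pmf mu s k = dlap_pmf mu s mu / exp (1 / s).
Proof.
  intros Hk. unfold dlap_pmf.
  rewrite Hk, Rminus_diag, Rabs_R0, Ropp_0, Rdiv_0_l, exp_0.
  replace (- (1) / s) with (- (1 / s)) by (unfold Rdiv; ring).
  rewrite exp_Ropp. unfold Rdiv. ring.
Qed.

Theorem mainTheorem12 (l mu u : Z) (s : R) :
  (l < mu)%Z -> (mu < u)%Z -> 0 < s ->
  (u - l + 1 >= 4)%Z ->
  exists k : Z, (l <= k <= u)%Z /\ ~ is_dyadic (clamped_dlap_mass l u mu s k).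
Proof.
  intros Hl Hu Hs Hsize.
  assert (Ha : 1 < exp (1 / s)).
  { rewrite <- exp_0 at 1. apply exp_increasing, Rdiv_lt_0_compat; lra. }
  assert (Hneighbour : exists k, (l < k < u)%Z /\ Rabs (IZR k - IZR mu) = 1).
  { destruct (Z_lt_ge_dec l (mu - 1)) as [H | H].
    - exists (mu - 1)%Z. split; [lia|].
      replace (IZR (mu - 1) - IZR mu) with (- (1)) by (rewrite minus_IZR; ring).
      rewrite Rabs_Ropp. apply Rabs_R1.
    - exists (mu + 1)%Z. split; [lia|].
      replace (IZR (mu + 1) - IZR mu) with 1 by (rewrite plus_IZR; ring).
      apply Rabs_R1. }
  destruct Hneighbour as [k [Hk Hdist]].
  destruct (classic (is_dyadic (clamped_dlap_mass l u mu s mu))) as [Hcenter | Hcenter].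
  - exists k. split; [lia|]. intros Hneigh.
    apply is_dyadic_dyadic in Hcenter, Hneigh.
    rewrite clamped_dlap_mass_interior, dlap_pmf_center in Hcenter by lia.
    rewrite clamped_dlap_mass_interior, (dlap_pmf_neighbour _ _ _ Hdist), dlap_pmf_center
      in Hneigh by lia.
    exact (not_dyadic_center_and_neighbour _ Ha Hcenter Hneigh).
  - exists mu. split; [lia | exact Hcenter].
Qed.
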